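(* Let $A,B\subseteq\mathbb{N}$ and $L\in\mathbb{R}$. The limit $\lim_{n\to\infty}\frac{B(n)-A(n)}{n}$ exists and equals $L$ if and only if $\mu(B)-\mu(A)=L$ for every density measure $\mu$.
   Context: $\mathbb{N}=\{1,2,3,\dots\}$. For $A\subseteq\mathbb{N}$ let $A(n)=|A\cap[1,n]|$. Let $\mathcal{D}$ be the collection of all $A\subseteq\mathbb{N}$ for which the asymptotic density $d(A)=\lim_{n\to\infty}\frac{A(n)}{n}$ exists. A density measure is a function $\mu:\mathcal{P}(\mathbb{N})\to[0,1]$ with $\mu(\mathbb{N})=1$, $\mu(A\cup B)=\mu(A)+\mu(B)$ for all disjoint $A,B\subseteq\mathbb{N}$, and $\mu(A)=d(A)$ for all $A\in\mathcal{D}$. *)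

From Stdlib Require Import Reals ClassicalEpsilon.
From Coquelicot Require Import Coquelicot.
Open Scope R_scope.

(* A subset of N = {1,2,3,...} is represented by a predicate on nat all of
   whose elements are positive. *)
Definition subsetN (A : nat -> Prop) : Prop := forall x, A x -> (0 < x)%nat.

Definition Nplus : nat -> Prop := fun x => (0 < x)%nat.

Fixpoint cnt (A : nat -> Prop) (n : nat) : R :=
  match n with
  | O => 0
  | S m => cnt A m + (if excluded_middle_informative (A (S m)) then 1 else 0)
  end.

Definition has_density (A : nat -> Prop) (l : R) : Prop :=
  is_lim_seq (fun n => cnt A n / INR n) l.

(* density measure on P(N) (values on predicates not contained in N are
   irrelevant and unconstrained) *)
Definition density_measure (mu : (nat -> Prop) -> R) : Prop :=
  (forall A, subsetN A -> 0 <= mu A <= 1) /\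
  mu Nplus = 1 /\
  (forall A B, subsetN A -> subsetN B -> (forall x, ~ (A x /\ B x)) ->
     mu (fun x => A x \/ B x) = mu A + mu B) /\
  (forall A l, subsetN A -> has_density A l -> mu A = l).

(* Write [C = B \ A], [D = A \ B] and let [W] be the rest of [N \ (A ∩ B)].
   If [(B(n) - A(n))/n -> L], adding every other element of [W] to [C], resp.
   to [D], gives sets of density [(1 + L)/2], resp. [(1 - L)/2]; additivity of a
   density measure on these two unions and on [B = C ∪ (A ∩ B)],
   [A = D ∪ (A ∩ B)] forces [mu B - mu A = L].  Conversely, if the limit fails,
   [|(B(n) - A(n))/n - L| >= eps] on an infinite set [K], and the limit of
   [X(n)/n] along a nonprincipal ultrafilter containing [K] is a density measure
   with [mu B - mu A <> L]. *)

From Stdlib Require Import Reals Lra Lia Classical ClassicalEpsilon FunctionalExtensionality PropExtensionality.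
From Coquelicot Require Import Coquelicot.
From mathcomp Require filter.
Open Scope R_scope.

Lemma pred_ext (P Q : nat -> Prop) : (forall x, P x <-> Q x) -> P = Q.
Proof.
  intros HPQ. apply functional_extensionality. intros x.
  apply propositional_extensionality, HPQ.
Qed.

Lemma cnt_ext (P Q : nat -> Prop) n :
  (forall x, (0 < x)%nat -> P x <-> Q x) -> cnt P n = cnt Q n.
Proof.
  intros HPQ. induction n as [|n IH]; simpl; [reflexivity|]. rewrite IH.
  specialize (HPQ (S n) ltac:(lia)).
  repeat destruct excluded_middle_informative; tauto || reflexivity.
Qed.

Lemma cnt_union_disjoint (P Q : nat -> Prop) n : (forall x, ~ (P x /\ Q x)) ->
  cnt (fun x => P x \/ Q x) n = cnt P n + cnt Q n.
Proof.
  intros HPQ. induction n as [|n IH]; simpl; [lra|]. rewrite IH.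
  specialize (HPQ (S n)).
  repeat destruct excluded_middle_informative; tauto || lra.
Qed.

Lemma cnt_split (P Q : nat -> Prop) n :
  cnt P n = cnt (fun x => P x /\ Q x) n + cnt (fun x => P x /\ ~ Q x) n.
Proof.
  rewrite <- cnt_union_disjoint by tauto. apply cnt_ext.
  intros x _. destruct (classic (Q x)); tauto.
Qed.

Lemma cnt_Nplus n : cnt Nplus n = INR n.
Proof.
  induction n as [|n IH]; simpl cnt; [reflexivity|]. rewrite IH, S_INR.
  destruct excluded_middle_informative as [_|hn]; [lra|].
  exfalso. apply hn. unfold Nplus. lia.
Qed.

Lemma cnt_bounds (P : nat -> Prop) n : 0 <= cnt P n <= INR n.
Proof.
  induction n as [|n IH]; simpl cnt; [simpl; lra|]. rewrite S_INR.
  destruct excluded_middle_informative; lra.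
Qed.

Lemma cnt_div_bounds (P : nat -> Prop) n : 0 <= cnt P n / INR n <= 1.
Proof.
  pose proof (cnt_bounds P n) as Hb. destruct n as [|n].
  - simpl. unfold Rdiv. rewrite Rinv_0. lra.
  - assert (Hn : 0 < INR (S n)) by (apply lt_0_INR; lia).
    split.
    + apply Rdiv_le_0_compat; lra.
    + apply (Rmult_le_reg_r (INR (S n))); [exact Hn|].
      unfold Rdiv. rewrite Rmult_assoc, Rinv_l by lra. lra.
Qed.

Definition odd_ranked (W : nat -> Prop) (x : nat) : Prop :=
  W x /\ exists k, cnt W x = 2 * INR k + 1.

Lemma INR_double_neq_double_plus1 a b : 2 * INR a <> 2 * INR b + 1.
Proof.
  intros Hab. assert (Hnat : INR (2 * a) = INR (2 * b + 1)).
  { rewrite plus_INR, !mult_INR. simpl. lra. }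
  apply INR_eq in Hnat. lia.
Qed.

Lemma cnt_odd_ranked (W : nat -> Prop) n : exists k,
  (cnt W n = 2 * INR k /\ cnt (odd_ranked W) n = INR k) \/
  (cnt W n = 2 * INR k + 1 /\ cnt (odd_ranked W) n = INR k + 1).
Proof.
  induction n as [|n [k IH]].
  - exists 0%nat. left. simpl. lra.
  - assert (Hodd : odd_ranked W (S n) <->
                   W (S n) /\ exists k', cnt W (S n) = 2 * INR k' + 1) by reflexivity.
    simpl cnt in Hodd |- *.
    destruct (excluded_middle_informative (W (S n))) as [hW|hW];
    destruct (excluded_middle_informative (odd_ranked W (S n))) as [hE|hE].
    + destruct IH as [[h1 h2]|[h1 h2]].
      * exists k. right. lra.
      * exfalso. destruct (proj1 Hodd hE) as [_ [k' hk']].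
        apply (INR_double_neq_double_plus1 (S k) k'). rewrite S_INR. lra.
    + destruct IH as [[h1 h2]|[h1 h2]].
      * exfalso. apply hE, Hodd. split; [exact hW|]. exists k. lra.
      * exists (S k). left. rewrite S_INR. lra.
    + exfalso. destruct (proj1 Hodd hE). contradiction.
    + exists k. lra.
Qed.

Lemma cnt_odd_ranked_half (W : nat -> Prop) n :
  0 <= 2 * cnt (odd_ranked W) n - cnt W n <= 1.
Proof. destruct (cnt_odd_ranked W n) as [k [[h1 h2]|[h1 h2]]]; lra. Qed.

Lemma is_lim_seq_INR_div_INR : is_lim_seq (fun n => INR n / INR n) 1.
Proof.
  apply is_lim_seq_ext_loc with (fun _ => 1).
  - exists 1%nat. intros n Hn. unfold Rdiv. rewrite Rinv_r; [reflexivity|].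
    apply not_0_INR. lia.
  - apply is_lim_seq_const.
Qed.

Lemma is_lim_seq_bounded_div_INR (d : nat -> R) (M : R) :
  (forall n, Rabs (d n) <= M) -> is_lim_seq (fun n => d n / INR n) 0.
Proof.
  intros Hd.
  assert (Hinv : is_lim_seq (fun n => / INR n) 0).
  { replace (Finite 0) with (Rbar_inv p_infty) by reflexivity.
    apply is_lim_seq_inv; [apply is_lim_seq_INR|discriminate]. }
  apply is_lim_seq_le_le with (fun n => - M * / INR n) (fun n => M * / INR n).
  - intros n. unfold Rdiv.
    destruct (proj1 (Rabs_le_between (d n) M) (Hd n)) as [Hlo Hhi].
    destruct n as [|n].
    + simpl. rewrite Rinv_0. lra.
    + assert (Hn : 0 < / INR (S n)) by (apply Rinv_0_lt_compat, lt_0_INR; lia).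
      split; apply Rmult_le_compat_r; lra.
  - pose proof (is_lim_seq_scal_l _ (- M) 0 Hinv) as Hlim.
    simpl in Hlim. rewrite Rmult_0_r in Hlim. exact Hlim.
  - pose proof (is_lim_seq_scal_l _ M 0 Hinv) as Hlim.
    simpl in Hlim. rewrite Rmult_0_r in Hlim. exact Hlim.
Qed.

Lemma is_lim_seq_half_excess (u d : nat -> R) (L M : R) :
  is_lim_seq (fun n => u n / INR n) L -> (forall n, Rabs (d n) <= M) ->
  is_lim_seq (fun n => (INR n + u n + d n) / 2 / INR n) ((1 + L) / 2).
Proof.
  intros Hu Hd.
  apply is_lim_seq_ext
    with (fun n => (INR n / INR n + u n / INR n + d n / INR n) * / 2).
  - intros n. unfold Rdiv. ring.
  - replace ((1 + L) / 2) with ((1 + L + 0) * / 2) by lra.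
    apply (is_lim_seq_scal_r _ (/ 2) (1 + L + 0)).
    apply is_lim_seq_plus'; [apply is_lim_seq_plus'|].
    + apply is_lim_seq_INR_div_INR.
    + exact Hu.
    + exact (is_lim_seq_bounded_div_INR d M Hd).
Qed.

Lemma has_density_union_odd_ranked (C D W : nat -> Prop) (L : R) :
  (forall n, cnt C n + cnt D n + cnt W n = INR n) ->
  (forall x, ~ (C x /\ W x)) ->
  is_lim_seq (fun n => (cnt C n - cnt D n) / INR n) L ->
  has_density (fun x => C x \/ odd_ranked W x) ((1 + L) / 2).
Proof.
  intros Hpart HCW Hlim.
  apply is_lim_seq_ext with (fun n =>
    (INR n + (cnt C n - cnt D n) + (2 * cnt (odd_ranked W) n - cnt W n)) / 2 / INR n).
  - intros n. rewrite cnt_union_disjoint.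
    + specialize (Hpart n). f_equal. lra.
    + intros x [hC [hW _]]. exact (HCW x (conj hC hW)).
  - apply (is_lim_seq_half_excess _ _ L 1 Hlim). intros n.
    apply Rabs_le. pose proof (cnt_odd_ranked_half W n). lra.
Qed.

Lemma density_measure_diff_of_disjoint mu (C D : nat -> Prop) (L : R) :
  density_measure mu -> subsetN C -> subsetN D -> (forall x, ~ (C x /\ D x)) ->
  is_lim_seq (fun n => (cnt C n - cnt D n) / INR n) L -> mu C - mu D = L.
Proof.
  intros [_ [_ [Hadd Hdens]]] HC HD HCD Hlim.
  set (W := fun x => Nplus x /\ ~ C x /\ ~ D x).
  assert (Hpart : forall n, cnt C n + cnt D n + cnt W n = INR n).
  { intros n. rewrite <- cnt_Nplus, <- (cnt_union_disjoint C D),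
      <- (cnt_union_disjoint (fun x => C x \/ D x) W).
    - apply cnt_ext. intros x Hx. unfold W, Nplus. tauto.
    - unfold W. tauto.
    - exact HCD. }
  assert (HlimDC : is_lim_seq (fun n => (cnt D n - cnt C n) / INR n) (- L)).
  { apply is_lim_seq_ext with (fun n => - ((cnt C n - cnt D n) / INR n)).
    - intros n. unfold Rdiv. ring.
    - exact (proj1 (is_lim_seq_opp _ L) Hlim). }
  assert (HX := has_density_union_odd_ranked C D W L Hpart
                  ltac:(unfold W; tauto) Hlim).
  assert (HY := has_density_union_odd_ranked D C W (- L)
                  ltac:(intros n; specialize (Hpart n); lra)
                  ltac:(unfold W; tauto) HlimDC).
  assert (HE : subsetN (odd_ranked W)) by (intros x [[Hx _] _]; exact Hx).
  assert (HCE : forall x, ~ (C x /\ odd_ranked W x)) by (unfold odd_ranked, W; tauto).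
  assert (HDE : forall x, ~ (D x /\ odd_ranked W x)) by (unfold odd_ranked, W; tauto).
  apply Hdens in HX; [|intros x [Hx|Hx]; auto].
  apply Hdens in HY; [|intros x [Hx|Hx]; auto].
  rewrite Hadd in HX, HY by assumption.
  lra.
Qed.

Lemma density_measure_split mu (X P : nat -> Prop) :
  density_measure mu -> subsetN X ->
  mu X = mu (fun x => X x /\ P x) + mu (fun x => X x /\ ~ P x).
Proof.
  intros [_ [_ [Hadd _]]] HX. rewrite <- Hadd.
  - f_equal. apply pred_ext. intros x. destruct (classic (P x)); tauto.
  - intros x [Hx _]. auto.
  - intros x [Hx _]. auto.
  - tauto.
Qed.

Lemma density_measure_diff_of_lim mu (A B : nat -> Prop) (L : R) :
  density_measure mu -> subsetN A -> subsetN B ->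
  is_lim_seq (fun n => (cnt B n - cnt A n) / INR n) L -> mu B - mu A = L.
Proof.
  intros Hmu HA HB Hlim.
  rewrite (density_measure_split mu B A), (density_measure_split mu A B) by assumption.
  replace (fun x => B x /\ A x) with (fun x => A x /\ B x) by (apply pred_ext; tauto).
  enough (Hdiff : mu (fun x => B x /\ ~ A x) - mu (fun x => A x /\ ~ B x) = L) by lra.
  apply density_measure_diff_of_disjoint; [exact Hmu| | |tauto|].
  - intros x [Hx _]. auto.
  - intros x [Hx _]. auto.
  - apply is_lim_seq_ext with (fun n => (cnt B n - cnt A n) / INR n); [|exact Hlim].
    intros n. rewrite (cnt_split B A n), (cnt_split A B n).
    rewrite (cnt_ext (fun x => B x /\ A x) (fun x => A x /\ B x)) by tauto.
    unfold Rdiv. ring.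
Qed.

Record nonprincipal_ultrafilter (U : (nat -> Prop) -> Prop) : Prop := {
  ultra_tail : forall N, U (fun n => (N <= n)%nat);
  ultra_and : forall P Q, U P -> U Q -> U (fun n => P n /\ Q n);
  ultra_mono : forall P Q : nat -> Prop, (forall n, P n -> Q n) -> U P -> U Q;
  ultra_proper : ~ U (fun _ => False);
  ultra_dichotomy : forall P, U P \/ U (fun n => ~ P n)
}.

Lemma nonprincipal_ultrafilter_containing (K : nat -> Prop) :
  (forall N, exists n, (N <= n)%nat /\ K n) ->
  exists U, nonprincipal_ultrafilter U /\ U K.
Proof.
  intros HK.
  set (F := fun P : nat -> Prop => exists N, forall n, (N <= n)%nat -> K n -> P n).
  assert (HF : filter.ProperFilter F).
  { apply filter.Build_ProperFilter_ex.
    - intros P [N HN]. destruct (HK N) as [n [Hn Kn]]. exists n. auto.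
    - split.
      + exists 0%nat. intros; exact I.
      + intros P Q [N1 H1] [N2 H2]. exists (Nat.max N1 N2). intros n Hn Kn.
        split; [apply H1|apply H2]; auto; lia.
      + intros P Q HPQ [N HN]. exists N. auto. }
  destruct (filter.ultraFilterLemma HF) as [U [HU HFU]].
  exists U. split; [split|].
  - intros N. apply HFU. exists N. auto.
  - intros P Q. apply (@filter.filterI _ U _).
  - intros P Q. apply (@filter.filterS _ U _).
  - exact (@filter.filter_not_empty _ U _).
  - intros P. apply filter.in_ultra_setVsetC, HU.
  - apply HFU. exists 0%nat. auto.
Qed.

Section UltraLimit.

Variable U : (nat -> Prop) -> Prop.
Hypothesis HU : nonprincipal_ultrafilter U.

Definition is_ulim (x : nat -> R) (l : R) : Prop :=
  forall eps, 0 < eps -> U (fun n => Rabs (x n - l) < eps).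

Lemma is_ulim_exists (x : nat -> R) (a b : R) :
  (forall n, a <= x n <= b) -> { l | is_ulim x l }.
Proof.
  intros Hx. set (S := fun r => U (fun n => r <= x n)).
  destruct (completeness S) as [l [Hub Hlub]].
  - exists b. intros r Hr. destruct (Rle_dec r b) as [h|h]; [exact h|].
    exfalso. apply (ultra_proper _ HU). refine (ultra_mono _ HU _ _ _ Hr).
    intros n hn. specialize (Hx n). lra.
  - exists a. refine (ultra_mono _ HU _ _ _ (ultra_tail _ HU 0)).
    intros n _. apply Hx.
  - exists l. intros eps Heps.
    assert (Hlo : U (fun n => l - eps < x n)).
    { destruct (classic (exists r, S r /\ l - eps < r)) as [[r [Hr Hlt]]|Hno].
      - refine (ultra_mono _ HU _ _ _ Hr). intros n hn. lra.
      - exfalso. assert (l <= l - eps); [|lra]. apply Hlub. intros r Hr.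
        destruct (Rle_dec r (l - eps)) as [h|h]; [exact h|].
        exfalso. apply Hno. exists r. split; [exact Hr|lra]. }
    assert (Hhi : U (fun n => x n < l + eps)).
    { destruct (ultra_dichotomy _ HU (fun n => l + eps / 2 <= x n)) as [h|h].
      - exfalso. assert (l + eps / 2 <= l) by (apply Hub; exact h). lra.
      - refine (ultra_mono _ HU _ _ _ h). intros n hn. lra. }
    refine (ultra_mono _ HU _ _ _ (ultra_and _ HU _ _ Hlo Hhi)).
    intros n [h1 h2]. apply Rabs_def1; lra.
Qed.

Lemma is_ulim_unique (x : nat -> R) (l1 l2 : R) :
  is_ulim x l1 -> is_ulim x l2 -> l1 = l2.
Proof.
  intros H1 H2. destruct (Req_dec l1 l2) as [h|h]; [exact h|exfalso].
  assert (Heps : 0 < Rabs (l1 - l2) / 2)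
    by (apply Rdiv_lt_0_compat; [apply Rabs_pos_lt; lra|lra]).
  apply (ultra_proper _ HU).
  refine (ultra_mono _ HU _ _ _ (ultra_and _ HU _ _ (H1 _ Heps) (H2 _ Heps))).
  intros n [h1 h2]. pose proof (Rabs_triang (l1 - x n) (x n - l2)) as Htri.
  replace (l1 - x n + (x n - l2)) with (l1 - l2) in Htri by ring.
  rewrite (Rabs_minus_sym l1 (x n)) in Htri. lra.
Qed.

Lemma is_ulim_plus (x y : nat -> R) (a b : R) :
  is_ulim x a -> is_ulim y b -> is_ulim (fun n => x n + y n) (a + b).
Proof.
  intros Ha Hb eps Heps. assert (Heps2 : 0 < eps / 2) by lra.
  refine (ultra_mono _ HU _ _ _ (ultra_and _ HU _ _ (Ha _ Heps2) (Hb _ Heps2))).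
  intros n [h1 h2]. apply Rabs_def2 in h1. apply Rabs_def2 in h2.
  apply Rabs_def1; lra.
Qed.

Lemma is_ulim_minus (x y : nat -> R) (a b : R) :
  is_ulim x a -> is_ulim y b -> is_ulim (fun n => x n - y n) (a - b).
Proof.
  intros Ha Hb eps Heps. assert (Heps2 : 0 < eps / 2) by lra.
  refine (ultra_mono _ HU _ _ _ (ultra_and _ HU _ _ (Ha _ Heps2) (Hb _ Heps2))).
  intros n [h1 h2]. apply Rabs_def2 in h1. apply Rabs_def2 in h2.
  apply Rabs_def1; lra.
Qed.

Lemma is_lim_seq_is_ulim (x : nat -> R) (l : R) : is_lim_seq x l -> is_ulim x l.
Proof.
  intros Hx eps Heps. apply is_lim_seq_spec in Hx.
  destruct (Hx (mkposreal eps Heps)) as [N HN].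
  exact (ultra_mono _ HU _ _ HN (ultra_tail _ HU N)).
Qed.

Lemma is_ulim_bounds (x : nat -> R) (a b l : R) :
  (forall n, a <= x n <= b) -> is_ulim x l -> a <= l <= b.
Proof.
  intros Hx Hl. split.
  - destruct (Rle_dec a l) as [h|h]; [exact h|exfalso]. apply (ultra_proper _ HU).
    refine (ultra_mono _ HU _ _ _ (Hl (a - l) ltac:(lra))).
    intros n hn. apply Rabs_def2 in hn. specialize (Hx n). lra.
  - destruct (Rle_dec l b) as [h|h]; [exact h|exfalso]. apply (ultra_proper _ HU).
    refine (ultra_mono _ HU _ _ _ (Hl (l - b) ltac:(lra))).
    intros n hn. apply Rabs_def2 in hn. specialize (Hx n). lra.
Qed.

Definition ulim_density (X : nat -> Prop) : R :=
  proj1_sig (is_ulim_exists (fun n => cnt X n / INR n) 0 1 (cnt_div_bounds X)).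

Lemma is_ulim_density (X : nat -> Prop) :
  is_ulim (fun n => cnt X n / INR n) (ulim_density X).
Proof. exact (proj2_sig (is_ulim_exists _ 0 1 (cnt_div_bounds X))). Qed.

Lemma ulim_density_density_measure : density_measure ulim_density.
Proof.
  split; [|split; [|split]].
  - intros X _. exact (is_ulim_bounds _ 0 1 _ (cnt_div_bounds X) (is_ulim_density X)).
  - apply (is_ulim_unique (fun n => cnt Nplus n / INR n)); [apply is_ulim_density|].
    apply is_lim_seq_is_ulim.
    apply is_lim_seq_ext with (fun n => INR n / INR n).
    + intros n. rewrite cnt_Nplus. reflexivity.
    + exact is_lim_seq_INR_div_INR.
  - intros X Y _ _ HXY.
    apply (is_ulim_unique (fun n => cnt (fun x => X x \/ Y x) n / INR n));
      [apply is_ulim_density|].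
    replace (fun n => cnt (fun x => X x \/ Y x) n / INR n)
      with (fun n => cnt X n / INR n + cnt Y n / INR n).
    + apply is_ulim_plus; apply is_ulim_density.
    + apply functional_extensionality. intros n.
      rewrite (cnt_union_disjoint X Y n HXY). unfold Rdiv. ring.
  - intros X l _ Hl. apply (is_ulim_unique (fun n => cnt X n / INR n)).
    + apply is_ulim_density.
    + exact (is_lim_seq_is_ulim _ _ Hl).
Qed.

End UltraLimit.

Lemma not_is_lim_seq_frequently (s : nat -> R) (L : R) :
  ~ is_lim_seq s L ->
  exists eps : posreal, forall N, exists n, (N <= n)%nat /\ eps <= Rabs (s n - L).
Proof.
  intros Hnot. apply NNPP. intros Hne. apply Hnot, is_lim_seq_spec. intros eps.
  apply NNPP. intros Hev. apply Hne. exists eps. intros N.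
  apply NNPP. intros HN. apply Hev. exists N. intros n Hn.
  apply Rnot_le_lt. intros Hle. apply HN. exists n. auto.
Qed.

Lemma is_lim_seq_of_density_measure_diff (A B : nat -> Prop) (L : R) :
  (forall mu, density_measure mu -> mu B - mu A = L) ->
  is_lim_seq (fun n => (cnt B n - cnt A n) / INR n) L.
Proof.
  intros Hall. set (s := fun n => (cnt B n - cnt A n) / INR n).
  apply NNPP. intros Hnot.
  destruct (not_is_lim_seq_frequently s L Hnot) as [eps Hfar].
  destruct (nonprincipal_ultrafilter_containing _ Hfar) as [U [HU HUfar]].
  set (mu := ulim_density U HU).
  assert (Hs : is_ulim U s (mu B - mu A)).
  { replace s with (fun n => cnt B n / INR n - cnt A n / INR n).
    - apply is_ulim_minus; [exact HU|apply is_ulim_density|apply is_ulim_density].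
    - apply functional_extensionality. intros n. unfold s, Rdiv. ring. }
  rewrite (Hall mu (ulim_density_density_measure U HU)) in Hs.
  apply (ultra_proper _ HU).
  refine (ultra_mono _ HU _ _ _ (ultra_and _ HU _ _ HUfar (Hs eps (cond_pos eps)))).
  intros n [h1 h2]. lra.
Qed.

Theorem proposition3p14 (A B : nat -> Prop) (L : R) :
  subsetN A -> subsetN B ->
  (is_lim_seq (fun n => (cnt B n - cnt A n) / INR n) L <->
   forall mu : (nat -> Prop) -> R, density_measure mu -> mu B - mu A = L).
Proof.
  intros HA HB. split.
  - intros Hlim mu Hmu. exact (density_measure_diff_of_lim mu A B L Hmu HA HB Hlim).
  - apply is_lim_seq_of_density_measure_diff.
Qed.
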